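(* Let $\Lambda$ be a row-finite $k$-graph with no sources and $R$ a commutative ring with $1$. Let $\mu,\nu\in\Lambda$ with $s(\mu)=s(\nu)$ and $r\in R\setminus\{0\}$ such that $r\,s_\mu s_{\nu^*}\in\mathcal{D}'$. Then $(\mu,\nu)$ is a cycline pair.
   Context: A $k$-graph is a countable category $\Lambda$ (vertices $\Lambda^0$, paths, maps $r,s$) with a degree functor $d:\Lambda\to\mathbb{N}^k$ satisfying unique factorization: if $d(\lambda)=m+n$ there are unique $\mu,\nu$ with $s(\mu)=r(\nu)$, $d(\mu)=m,d(\nu)=n$, $\lambda=\mu\nu$. $v\Lambda=\{\lambda:r(\lambda)=v\}$, $v\Lambda^n$ those of degree $n$; row-finite with no sources means each $v\Lambda^n$ is finite and nonempty. ${\rm KP}_R(\Lambda)$ is the universal $R$-algebra generated by $p_v$ ($v\in\Lambda^0$), $s_\lambda,s_{\lambda^*}$ ($d(\lambda)\ne0$) with relations (KP1) $p_v$ mutually orthogonal idempotents; (KP2) $s_\lambda s_\mu=s_{\lambda\mu}$, $s_{\mu^*}s_{\lambda^*}=s_{(\lambda\mu)^*}$, $p_{r(\lambda)}s_\lambda=s_\lambda=s_\lambda p_{s(\lambda)}$, $p_{s(\lambda)}s_{\lambda^*}=s_{\lambda^*}=s_{\lambda^*}p_{r(\lambda)}$ when $r(\mu)=s(\lambda)$; (KP3) $s_{\lambda^*}s_\mu=\delta_{\lambda,\mu}p_{s(\lambda)}$ when $d(\lambda)=d(\mu)$; (KP4) $p_v=\sum_{\lambda\in v\Lambda^n}s_\lambda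 s_{\lambda^*}$ for $n\ne0$. Convention $s_v=s_{v^*}=p_v$. $\mathcal{D}$ is the $R$-subalgebra generated by $\{s_\mu s_{\mu^*}:\mu\in\Lambda\}$, and $\mathcal{D}'=\{a\in{\rm KP}_R(\Lambda): ad=da\ \forall d\in\mathcal{D}\}$. A pair $(\alpha,\beta)$ with $s(\alpha)=s(\beta)$ is a cycline pair if $s_{\alpha\gamma}s_{(\alpha\gamma)^*}=s_{\beta\gamma}s_{(\beta\gamma)^*}$ for all $\gamma\in s(\alpha)\Lambda$. *)

From HB Require Import structures.
From mathcomp Require Import all_boot all_order all_algebra.
Set Implicit Arguments. Unset Strict Implicit. Unset Printing Implicit Defensive.
Import GRing.Theory.
Local Open Scope ring_scope.

Definition degk (k : nat) := {ffun 'I_k -> nat}.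
Definition deg0 (k : nat) : degk k := [ffun => 0%N].
Definition degadd (k : nat) (m n : degk k) : degk k := [ffun i => (m i + n i)%N].

(* k-graphs: countable categories (objects = vertices, morphisms =     *)
(* paths) with a degree functor d : Lambda -> N^k satisfying the       *)
(* unique factorisation property.  comp l m is the composite "l m"     *)
(* (meaningful when src l = rng m).                                    *)
Record kgraph (k : nat) := KGraph {
  kvert : countType;
  kpath : countType;
  rng : kpath -> kvert;
  src : kpath -> kvert;
  idp : kvert -> kpath;
  comp : kpath -> kpath -> kpath;
  dg : kpath -> degk k;
  rng_idp : forall v, rng (idp v) = v;
  src_idp : forall v, src (idp v) = v;
  rng_comp : forall l m, src l = rng m -> rng (comp l m) = rng l;
  src_comp : forall l m, src l = rng m -> src (comp l m) = src m;
  comp_idl : forall l, comp (idp (rng l)) l = l;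
  comp_idr : forall l, comp l (idp (src l)) = l;
  compA : forall l m n, src l = rng m -> src m = rng n ->
            comp l (comp m n) = comp (comp l m) n;
  dg_idp : forall v, dg (idp v) = deg0 k;
  dg_comp : forall l m, src l = rng m -> dg (comp l m) = degadd (dg l) (dg m);
  unique_factorisation : forall l (m n : degk k), dg l = degadd m n ->
    exists mu nu, [/\ src mu = rng nu, dg mu = m, dg nu = n & l = comp mu nu]
      /\ forall mu' nu', src mu' = rng nu' -> dg mu' = m -> dg nu' = n ->
            l = comp mu' nu' -> mu' = mu /\ nu' = nu
}.

Definition enumerates (k : nat) (L : kgraph k) (v : kvert L) (n : degk k)
  (s : seq (kpath L)) : Prop :=
  uniq s /\ forall l, l \in s <-> (rng l = v /\ dg l = n).

Definition row_finite_no_sources (k : nat) (L : kgraph k) : Prop :=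
  forall (v : kvert L) (n : degk k),
    (exists s, enumerates v n s) /\ (exists l, rng l = v /\ dg l = n).

Definition nu_alg_axioms (R : comPzRingType) (A : lmodType R) (mul : A -> A -> A)
  : Prop :=
  [/\ forall x y z, mul x (mul y z) = mul (mul x y) z,
      forall (a : R) x y z, mul (a *: x + y) z = a *: mul x z + mul y z
    & forall (a : R) x y z, mul z (a *: x + y) = a *: mul z x + mul z y].

Definition nu_alg_hom (R : comPzRingType) (A : lmodType R) (mulA : A -> A -> A)
  (B : lmodType R) (mulB : B -> B -> B) (f : A -> B) : Prop :=
  (forall (a : R) x y, f (a *: x + y) = a *: f x + f y) /\
  (forall x y, f (mulA x y) = mulB (f x) (f y)).

(* s_v = s_{v^*} = p_v, the families s, ss (ss l stands for s_{l^*})    *)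
(* are given on all paths, with s (idp v) = ss (idp v) = p v.           *)
Definition KP_family (k : nat) (L : kgraph k) (R : comPzRingType)
  (B : lmodType R) (mul : B -> B -> B)
  (p : kvert L -> B) (s ss : kpath L -> B) : Prop :=
  [/\
      forall v, s (idp v) = p v /\ ss (idp v) = p v,
      (forall v, mul (p v) (p v) = p v) /\
      (forall v w, v <> w -> mul (p v) (p w) = 0),
      [/\ forall l m, src l = rng m -> mul (s l) (s m) = s (comp l m),
          forall l m, src l = rng m -> mul (ss m) (ss l) = ss (comp l m),
          forall l, mul (p (rng l)) (s l) = s l /\ s l = mul (s l) (p (src l))
        & forall l, mul (p (src l)) (ss l) = ss l /\ ss l = mul (ss l) (p (rng l))],
      (forall l m, dg l = dg m ->
         mul (ss l) (s m) = if l == m then p (src l) else 0)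
    &
      (forall v (n : degk k) (e : seq (kpath L)), n != deg0 k -> enumerates v n e ->
         p v = \sum_(l <- e) mul (s l) (ss l))].

Definition is_KP_algebra (k : nat) (L : kgraph k) (R : comPzRingType)
  (A : lmodType R) (mul : A -> A -> A)
  (p : kvert L -> A) (s ss : kpath L -> A) : Prop :=
  [/\ nu_alg_axioms mul,
      KP_family mul p s ss
    & forall (B : lmodType R) (mulB : B -> B -> B)
             (q : kvert L -> B) (t tt : kpath L -> B),
        nu_alg_axioms mulB -> KP_family mulB q t tt ->
        (exists f : A -> B, [/\ nu_alg_hom mul mulB f,
                                forall v, f (p v) = q v,
                                forall l, f (s l) = t l
                              & forall l, f (ss l) = tt l]) /\
        (forall f g : A -> B,
           nu_alg_hom mul mulB f -> nu_alg_hom mul mulB g ->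
           (forall v, f (p v) = g (p v)) ->
           (forall l, f (s l) = g (s l)) ->
           (forall l, f (ss l) = g (ss l)) ->
           forall x, f x = g x)].

Inductive in_D (k : nat) (L : kgraph k) (R : comPzRingType)
  (A : lmodType R) (mul : A -> A -> A) (s ss : kpath L -> A) : A -> Prop :=
| inD_gen : forall mu, in_D mul s ss (mul (s mu) (ss mu))
| inD_0 : in_D mul s ss 0
| inD_add : forall x y, in_D mul s ss x -> in_D mul s ss y -> in_D mul s ss (x + y)
| inD_scale : forall (a : R) x, in_D mul s ss x -> in_D mul s ss (a *: x)
| inD_mul : forall x y, in_D mul s ss x -> in_D mul s ss y -> in_D mul s ss (mul x y).

Definition in_D' (k : nat) (L : kgraph k) (R : comPzRingType)
  (A : lmodType R) (mul : A -> A -> A) (s ss : kpath L -> A) (a : A) : Prop :=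
  forall d, in_D mul s ss d -> mul a d = mul d a.

Definition cycline_pair (k : nat) (L : kgraph k) (R : comPzRingType)
  (A : lmodType R) (mul : A -> A -> A) (s ss : kpath L -> A)
  (alpha beta : kpath L) : Prop :=
  src alpha = src beta /\
  forall g, rng g = src alpha ->
    mul (s (comp alpha g)) (ss (comp alpha g)) =
    mul (s (comp beta g)) (ss (comp beta g)).

(* Write P_l = s_l s_{l*}, a = s_mu s_{nu*} and, for g in s(mu)Lambda,
   y = s_{nu g} s_{(mu g)*}.  By (KP2)-(KP3), a P_{nu g} = P_{mu g} a, a y = P_{mu g}
   and y a = P_{nu g}, so the commutation of r a with P_{mu g} and P_{nu g} gives
   r P_{mu g} = r P_{nu g} P_{mu g} = r P_{nu g}.
   To cancel r, expand both sides by (KP4) into sums of P_l over paths l of one common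
   degree.  These are mutually orthogonal idempotents, so a path occurring on one side only
   would give r P_l = 0, hence r p_{s(l)} = s_{l*} (r P_l) s_l = 0.  That never happens:
   the Kumjian-Pask relations are realised by operators on R-valued functions on the
   infinite path space, S_l f(x) = [x starts with l] f(shift_{d(l)} x), in which p_v is
   multiplication by the indicator of the paths of range v; as Lambda has no sources, every
   vertex is the range of an infinite path.  For k = 0 all paths are vertices and mu = nu. *)

From Pilot Require Import Defs.
From HB Require Import structures.
From mathcomp Require Import all_boot all_order all_algebra.
From mathcomp Require boolp.
From Stdlib Require Import ClassicalEpsilon.
Set Implicit Arguments. Unset Strict Implicit. Unset Printing Implicit Defensive.
Import GRing.Theory.
Local Open Scope ring_scope.
Local Notation comp := Defs.comp.
Local Notation compA := Defs.compA.

Lemma sum_if_mem (V : nmodType) (T : eqType) (E : seq T) (a : T) (c : V) :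
  uniq E -> \sum_(l <- E) (if a == l then c else 0) = if a \in E then c else 0.
Proof.
move=> uE; rewrite -big_mkcond (eq_bigl (pred1 a)) => [|l]; last by rewrite /= eq_sym.
by rewrite big_const_seq count_uniq_mem //; case: (a \in E); rewrite /= ?addr0.
Qed.

Section NuAlgebra.
Variables (R : comPzRingType) (A : lmodType R) (mul : A -> A -> A).
Hypothesis mul_alg : nu_alg_axioms mul.
Local Notation "x ** y" := (mul x y) (at level 40, left associativity).

Lemma nu_mulA x y z : x ** (y ** z) = x ** y ** z.
Proof. by case: mul_alg. Qed.

Lemma nu_mulDl x y z : (x + y) ** z = x ** z + y ** z.
Proof. by case: mul_alg => _ + _ => /(_ 1 x y z); rewrite !scale1r. Qed.

Lemma nu_mulDr x y z : z ** (x + y) = z ** x + z ** y.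
Proof. by case: mul_alg => _ _ /(_ 1 x y z); rewrite !scale1r. Qed.

Lemma nu_mul0l z : 0 ** z = 0.
Proof. by apply: (@addrI _ (0 ** z)); rewrite -nu_mulDl !addr0. Qed.

Lemma nu_mul0r z : z ** 0 = 0.
Proof. by apply: (@addrI _ (z ** 0)); rewrite -nu_mulDr !addr0. Qed.

Lemma nu_mulZl a x z : (a *: x) ** z = a *: (x ** z).
Proof. by case: mul_alg => _ + _ => /(_ a x 0 z); rewrite !addr0 nu_mul0l addr0. Qed.

Lemma nu_mulZr a x z : z ** (a *: x) = a *: (z ** x).
Proof. by case: mul_alg => _ _ /(_ a x 0 z); rewrite !addr0 nu_mul0r addr0. Qed.

Lemma nu_mul_sumr (I : Type) (E : seq I) (F : I -> A) z :
  z ** (\sum_(i <- E) F i) = \sum_(i <- E) z ** F i.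
Proof.
elim: E => [|i E IH]; first by rewrite !big_nil nu_mul0r.
by rewrite !big_cons nu_mulDr IH.
Qed.

Lemma nu_mul_suml (I : Type) (E : seq I) (F : I -> A) z :
  (\sum_(i <- E) F i) ** z = \sum_(i <- E) F i ** z.
Proof.
elim: E => [|i E IH]; first by rewrite !big_nil nu_mul0l.
by rewrite !big_cons nu_mulDl IH.
Qed.

End NuAlgebra.

Section Degrees.
Variable k : nat.

Lemma degaddC (m n : degk k) : degadd m n = degadd n m.
Proof. by apply/ffunP => i; rewrite !ffunE addnC. Qed.

Lemma degaddA (m n l : degk k) : degadd m (degadd n l) = degadd (degadd m n) l.
Proof. by apply/ffunP => i; rewrite !ffunE addnA. Qed.

Lemma add0deg (m : degk k) : degadd (deg0 k) m = m.
Proof. by apply/ffunP => i; rewrite !ffunE. Qed.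

Lemma degaddI (m : degk k) : injective (degadd m).
Proof.
move=> n n' /ffunP E; apply/ffunP => i.
by move/eqP: (E i); rewrite !ffunE eqn_add2l => /eqP.
Qed.

Definition diag_deg (j : nat) : degk k := [ffun => j].

Definition degsum (n : degk k) : nat := (\sum_(i < k) n i)%N.

Lemma leq_degsum (n : degk k) i : (n i <= degsum n)%N.
Proof. by rewrite /degsum (bigD1 i) //= leq_addr. Qed.

End Degrees.

Section Factorisation.
Variables (k : nat) (L : kgraph k).
Notation P := (kpath L).

Lemma comp_factor_uniq (a b a' b' : P) :
  src a = rng b -> src a' = rng b' -> dg a = dg a' ->
  comp a b = comp a' b' -> a = a' /\ b = b'.
Proof.
move=> h h' hd E.
have hdb : dg b = dg b' by apply: (@degaddI _ (dg a)); rewrite -dg_comp // E dg_comp // hd.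
have [? [? [_ U]]] := unique_factorisation (dg_comp h).
have [-> ->] := U a b h erefl erefl erefl.
by have [-> ->] := U a' b' h' (esym hd) (esym hdb) E.
Qed.

Lemma compI (a b b' : P) : src a = rng b -> src a = rng b' ->
  comp a b = comp a b' -> b = b'.
Proof. by move=> h h' /(comp_factor_uniq h h' erefl) []. Qed.

Lemma dg_eq0_idp (l : P) : dg l = deg0 k -> l = idp (rng l).
Proof.
move=> hl; have := @comp_factor_uniq (idp (rng l)) l l (idp (src l)).
rewrite src_idp rng_idp comp_idl comp_idr dg_idp hl.
by case/(_ erefl erefl erefl erefl) => ->.
Qed.

Lemma enumerates_map_comp (a : P) n e : enumerates (src a) n e ->
  uniq (map (comp a) e) /\ {in map (comp a) e, forall l, dg l = degadd (dg a) n}.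
Proof.
move=> [ue he]; split.
  rewrite map_inj_in_uniq // => x y /he [hx _] /he [hy _].
  by apply: compI; rewrite ?hx ?hy.
by move=> _ /mapP [t /he [ht dt] ->]; rewrite dg_comp // dt.
Qed.

(* The factorisation of [l] with a head of degree [m]; junk unless [m <= dg l]. *)
Definition factor (l : P) (m : degk k) : P * P :=
  epsilon (inhabits (l, l))
    (fun ab => [/\ src ab.1 = rng ab.2, dg ab.1 = m & l = comp ab.1 ab.2]).

Lemma factorP (l : P) m n : dg l = degadd m n ->
  [/\ src (factor l m).1 = rng (factor l m).2, dg (factor l m).1 = m,
      l = comp (factor l m).1 (factor l m).2 & dg (factor l m).2 = n].
Proof.
move=> hl; have [a [b [[hab ha _ El] _]]] := unique_factorisation hl.
have := @epsilon_spec _ (inhabits (l, l))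
  (fun ab => [/\ src ab.1 = rng ab.2, dg ab.1 = m & l = comp ab.1 ab.2]).
rewrite -/(factor l m); case=> [|h1 h2 h3]; first by exists (a, b).
split=> //; apply: (@degaddI _ m).
by rewrite -{1}h2 -dg_comp // -h3.
Qed.

Lemma factor_comp (a b : P) m : src a = rng b -> dg a = m ->
  factor (comp a b) m = (a, b).
Proof.
move=> h ha; have hd : dg (comp a b) = degadd m (dg b) by rewrite dg_comp // ha.
have [h1 h2 h3 _] := factorP hd.
have [E1 E2] := comp_factor_uniq h1 h (etrans h2 (esym ha)) (esym h3).
by move: E1 E2; case: factor => ? ? /= -> ->.
Qed.

End Factorisation.

Lemma kgraph0_idp (L : kgraph 0) (l : kpath L) : l = idp (src l).
Proof.
have hl : dg l = deg0 0 by apply/ffunP => -[].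
by rewrite {2}(dg_eq0_idp hl) src_idp -dg_eq0_idp.
Qed.

Section InfinitePaths.
Variables (k : nat) (L : kgraph k).
Notation P := (kpath L).

(* An infinite path x (a degree-preserving functor from Omega_k to L) is
   encoded by its initial segments [seg x n] = x(0, n). *)
Record ipath := IPath {
  seg : degk k -> P;
  dg_seg : forall n, dg (seg n) = n;
  seg_ext : forall m n, exists t,
    src (seg m) = rng t /\ seg (degadd m n) = comp (seg m) t }.

Lemma ipath_eq (x y : ipath) : seg x =1 seg y -> x = y.
Proof.
case: x y => [f df ef] [g dg' eg] /= /boolp.funext E; subst g.
by congr IPath; apply: boolp.Prop_irrelevance.
Qed.

Definition irng (x : ipath) : kvert L := rng (seg x (deg0 k)).

Lemma rng_seg x n : rng (seg x n) = irng x.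
Proof.
have [t [h E]] := seg_ext x (deg0 k) n.
by move: E; rewrite add0deg => ->; rewrite rng_comp.
Qed.

Lemma seg0 x : seg x (deg0 k) = idp (irng x).
Proof. by rewrite (dg_eq0_idp (dg_seg x _)) rng_seg. Qed.

Definition shift_seg m (x : ipath) n : P := (factor (seg x (degadd m n)) m).2.

Lemma shift_seg_eq x m n t : src (seg x m) = rng t ->
  seg x (degadd m n) = comp (seg x m) t -> shift_seg m x n = t.
Proof. by move=> h E; rewrite /shift_seg E factor_comp // dg_seg. Qed.

Lemma seg_split x m n :
  [/\ src (seg x m) = rng (shift_seg m x n),
      seg x (degadd m n) = comp (seg x m) (shift_seg m x n)
    & dg (shift_seg m x n) = n].
Proof.
have [t [h E]] := seg_ext x m n.
rewrite (shift_seg_eq h E); split=> //.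
by apply: (@degaddI _ m); rewrite -{1}(dg_seg x m) -dg_comp // -E dg_seg.
Qed.

Lemma dg_shift_seg m x n : dg (shift_seg m x n) = n.
Proof. by case: (seg_split x m n). Qed.

Lemma shift_seg_ext m x n d : exists t, src (shift_seg m x n) = rng t /\
  shift_seg m x (degadd n d) = comp (shift_seg m x n) t.
Proof.
have [t [h E]] := seg_ext x (degadd m n) d.
have [h1 E1 _] := seg_split x m n.
have ht : src (shift_seg m x n) = rng t by rewrite -h E1 src_comp.
exists t; split=> //; apply: shift_seg_eq; first by rewrite rng_comp.
by rewrite degaddA E E1 compA.
Qed.

Definition shift m x : ipath := IPath (dg_shift_seg m x) (shift_seg_ext m x).

Lemma irng_shift m x : irng (shift m x) = src (seg x m).
Proof. by rewrite /irng /=; case: (seg_split x m (deg0 k)). Qed.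

Lemma shift0 x : shift (deg0 k) x = x.
Proof.
apply: ipath_eq => n /=; apply: shift_seg_eq; rewrite seg0 ?src_idp ?rng_seg //.
by rewrite add0deg -(rng_seg x n) comp_idl.
Qed.

Lemma shiftD m1 m2 x : shift m2 (shift m1 x) = shift (degadd m1 m2) x.
Proof.
apply: ipath_eq => n /=.
have [h1 E1 _] := seg_split x m1 (degadd m2 n).
have [h2 E2 _] := seg_split x m1 m2.
have [h3 E3 _] := seg_split x (degadd m1 m2) n.
have h23 : src (shift_seg m1 x m2) = rng (shift_seg (degadd m1 m2) x n).
  by rewrite -h3 E2 src_comp.
apply: shift_seg_eq => /=; first exact: h23.
apply: (@compI _ _ (seg x m1)) => //; first by rewrite rng_comp.
by rewrite -E1 degaddA E3 E2 compA.
Qed.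

Lemma seg_compE m n x (l t : P) : src l = rng t -> dg l = m ->
  (seg x (degadd m n) == comp l t) = (seg x m == l) && (shift_seg m x n == t).
Proof.
move=> h hl; have [h1 E1 _] := seg_split x m n.
rewrite E1; apply/eqP/andP => [E | [/eqP -> /eqP ->] //].
by have [-> ->] := comp_factor_uniq h1 h (etrans (dg_seg x m) (esym hl)) E.
Qed.

Definition cat_seg (l : P) (y : ipath) n : P := (factor (comp l (seg y n)) n).1.

Section Concatenation.
Variables (l : P) (y : ipath).
Hypothesis lyP : src l = irng y.

Let src_l_seg n : src l = rng (seg y n). Proof. by rewrite rng_seg. Qed.

Lemma cat_segP n : exists b,
  [/\ src (cat_seg l y n) = rng b, comp l (seg y n) = comp (cat_seg l y n) b,
      dg (cat_seg l y n) = n & dg b = dg l].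
Proof.
have hd : dg (comp l (seg y n)) = degadd n (dg l).
  by rewrite dg_comp // dg_seg degaddC.
by have [? ? ? ?] := factorP hd; exists (factor (comp l (seg y n)) n).2.
Qed.

Lemma cat_seg_eq n a b : src a = rng b -> dg a = n ->
  comp l (seg y n) = comp a b -> cat_seg l y n = a.
Proof. by move=> h ha E; rewrite /cat_seg E factor_comp. Qed.

Lemma dg_cat_seg n : dg (cat_seg l y n) = n.
Proof. by have [b [_ _ ->]] := cat_segP n. Qed.

Lemma cat_seg_ext n d : exists t, src (cat_seg l y n) = rng t /\
  cat_seg l y (degadd n d) = comp (cat_seg l y n) t.
Proof.
have [t [ht Et]] := seg_ext y n d.
have [b [hb Eb dc db]] := cat_segP n.
have hbt : src b = rng t by rewrite -ht -(src_comp hb) -Eb src_comp.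
have dt : dg t = d.
  by apply: (@degaddI _ n); rewrite -{1}(dg_seg y n) -dg_comp // -Et dg_seg.
have hd : dg (comp b t) = degadd d (dg l) by rewrite dg_comp // dt db degaddC.
have [h1 h2 h3 _] := factorP hd.
set e1 := (factor _ d).1 in h1 h2 h3; set e2 := (factor _ d).2 in h1 h3.
have he : src (cat_seg l y n) = rng e1.
  by rewrite hb -(rng_comp h1) -h3 rng_comp.
exists e1; split=> //; apply: (cat_seg_eq (b := e2)).
- by rewrite src_comp.
- by rewrite dg_comp // dc h2.
by rewrite Et compA // Eb -compA // h3 compA.
Qed.

Definition cat : ipath := IPath dg_cat_seg cat_seg_ext.

Lemma irng_cat : irng cat = rng l.
Proof.
rewrite /irng /=; have [b [hb Eb _ _]] := cat_segP (deg0 k).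
by rewrite -(rng_comp hb) -Eb rng_comp.
Qed.

Lemma seg_cat : seg cat (dg l) = l.
Proof. by rewrite /= /cat_seg factor_comp. Qed.

Lemma shift_cat : shift (dg l) cat = y.
Proof.
apply: ipath_eq => n /=; apply: shift_seg_eq; rewrite seg_cat //.
have [t [ht Et]] := seg_ext y n (dg l).
apply: (cat_seg_eq (b := t)); first by rewrite src_comp.
  by rewrite dg_comp // dg_seg.
by rewrite degaddC Et compA.
Qed.

End Concatenation.

Lemma cat_shift (x : ipath) (l : P) (h : src l = irng (shift (dg l) x)) :
  seg x (dg l) = l -> cat h = x.
Proof.
move=> hx; apply: ipath_eq => n /=.
have [h1 E1 _] := seg_split x (dg l) n.
have [t [ht Et]] := seg_ext x n (dg l).
apply: (cat_seg_eq (b := t)) => //; first by rewrite dg_seg.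
by rewrite /= -{1}hx -E1 degaddC Et.
Qed.

Lemma cat_cat (l t : P) (y : ipath) (h1 : src t = irng y)
  (h2 : src l = irng (cat h1)) (h3 : src (comp l t) = irng y) :
  cat h2 = cat h3.
Proof.
apply: ipath_eq => n /=.
have hlt : src l = rng t by rewrite h2 irng_cat.
have hty : src t = rng (seg y n) by rewrite rng_seg.
have hlc : src l = rng (cat_seg t y n) by rewrite h2 -(rng_seg _ n).
have [e [he Ee _ _]] := cat_segP h1 n.
have [b [hb Eb db _]] := cat_segP h2 n; rewrite /= in hb Eb db.
have hbe : src b = rng e by rewrite -(src_comp hb) -Eb src_comp.
symmetry; apply: (cat_seg_eq (b := comp b e)) => //; first by rewrite rng_comp.
by rewrite -compA // Ee compA // Eb -compA.
Qed.

Lemma cat_idp v (y : ipath) (h : src (idp v) = irng y) : cat h = y.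
Proof.
apply: ipath_eq => n /=.
have hv : v = rng (seg y n) by rewrite rng_seg -h src_idp.
apply: (cat_seg_eq (b := idp (src (seg y n)))); rewrite ?rng_idp ?dg_seg //.
by rewrite comp_idr hv comp_idl.
Qed.

(* [l y] when [src l = irng y]; junk [y] otherwise. *)
Definition catp (l : P) (y : ipath) : ipath :=
  if src l =P irng y is ReflectT h then cat h else y.

Lemma catpE l y (h : src l = irng y) : catp l y = cat h.
Proof. by rewrite /catp; case: eqP => // h'; rewrite (eq_irrelevance h h'). Qed.

End InfinitePaths.

Section InfinitePathExistence.
Variables (k : nat) (L : kgraph k).
Hypothesis HL : row_finite_no_sources L.
Variable v : kvert L.
Notation P := (kpath L).

Definition unit_edge (w : kvert L) : P :=
  epsilon (inhabits (idp w)) (fun l => rng l = w /\ dg l = diag_deg k 1).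

Lemma unit_edgeP w : rng (unit_edge w) = w /\ dg (unit_edge w) = diag_deg k 1.
Proof.
apply: (@epsilon_spec _ _ (fun l => rng l = w /\ dg l = diag_deg k 1)).
by have [_] := HL w (diag_deg k 1).
Qed.

Fixpoint diag_path (j : nat) : P :=
  if j is j'.+1 then comp (diag_path j') (unit_edge (src (diag_path j')))
  else idp v.

Lemma diag_pathP j : rng (diag_path j) = v /\ dg (diag_path j) = diag_deg k j.
Proof.
elim: j => [|j [IH1 IH2]] /=.
  by rewrite rng_idp dg_idp; split=> //; apply/ffunP => i; rewrite !ffunE.
have [E1 E2] := unit_edgeP (src (diag_path j)).
rewrite rng_comp ?E1 // dg_comp ?E1 // IH2 E2; split=> //.
by apply/ffunP => i; rewrite !ffunE addn1.
Qed.

Lemma diag_path_ext i j : exists t,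
  src (diag_path i) = rng t /\ diag_path (i + j) = comp (diag_path i) t.
Proof.
elim: j => [|j [t [h E]]].
  by exists (idp (src (diag_path i))); rewrite addn0 rng_idp comp_idr.
have [E1 _] := unit_edgeP (src (diag_path (i + j))).
rewrite addnS /=; set w := unit_edge _ in E1 *.
have htw : src t = rng w by rewrite E1 E src_comp.
by exists (comp t w); rewrite rng_comp // E -compA.
Qed.

Lemma diag_deg_split (n : degk k) j : (forall i, n i <= j)%N ->
  diag_deg k j = degadd n [ffun i => j - n i]%N.
Proof. by move=> H; apply/ffunP => i; rewrite !ffunE subnKC. Qed.

Lemma factor_diag_path j1 j2 (n : degk k) : (forall i, n i <= j1)%N ->
  (j1 <= j2)%N -> (factor (diag_path j2) n).1 = (factor (diag_path j1) n).1.
Proof.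
move=> hn h12; have [t [ht Et]] := diag_path_ext j1 (j2 - j1).
rewrite subnKC // in Et.
have hd : dg (diag_path j1) = degadd n [ffun i => j1 - n i]%N.
  by rewrite (diag_pathP j1).2 (diag_deg_split hn).
have [h1 h2 h3 _] := factorP hd.
have hbt : src (factor (diag_path j1) n).2 = rng t by rewrite -(src_comp h1) -h3.
by rewrite Et {1}h3 -compA // factor_comp // rng_comp.
Qed.

Definition diag_seg (n : degk k) : P := (factor (diag_path (degsum n)) n).1.

Lemma diag_segP n : exists b, [/\ src (diag_seg n) = rng b,
  diag_path (degsum n) = comp (diag_seg n) b & dg (diag_seg n) = n].
Proof.
have hd : dg (diag_path (degsum n)) = degadd n [ffun i => degsum n - n i]%N.
  by rewrite (diag_pathP _).2 (@diag_deg_split n) // => i; apply: leq_degsum.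
by have [? ? ? _] := factorP hd; exists (factor (diag_path (degsum n)) n).2.
Qed.

Lemma dg_diag_seg n : dg (diag_seg n) = n.
Proof. by have [b [_ _ ->]] := diag_segP n. Qed.

Lemma diag_seg_ext n d : exists t,
  src (diag_seg n) = rng t /\ diag_seg (degadd n d) = comp (diag_seg n) t.
Proof.
set M := degsum (degadd n d).
have [e [he Ee de]] := diag_segP (degadd n d).
have [h1 h2 h3 _] := factorP de.
set a := (factor _ n).1 in h1 h2 h3; set b := (factor _ n).2 in h1 h3.
suff -> : diag_seg n = a by exists b.
have hsum : (degsum n <= M)%N by apply: leq_sum => i _; rewrite ffunE leq_addr.
rewrite /diag_seg -(factor_diag_path (@leq_degsum _ n) hsum).
have hbe : src b = rng e by rewrite -(src_comp h1) -h3.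
by rewrite Ee h3 -compA // factor_comp // rng_comp.
Qed.

Definition ipath_at : ipath L := IPath dg_diag_seg diag_seg_ext.

Lemma irng_ipath_at : irng ipath_at = v.
Proof.
rewrite /irng /=; have [b [hb Eb _]] := diag_segP (deg0 k).
by rewrite -(rng_comp hb) -Eb (diag_pathP _).1.
Qed.

End InfinitePathExistence.

Section LinearOperators.
Variables (R : comPzRingType) (X : Type).

Definition linear_op (T : (X -> R) -> X -> R) : Prop :=
  forall (a : R) f g, T (fun x => a * f x + g x) = fun x => a * T f x + T g x.

Record linop := Linop { apply_op :> (X -> R) -> X -> R; _ : linear_op apply_op }.

Lemma linopP (T : linop) : linear_op T. Proof. by case: T. Qed.

Lemma linop_eq (T U : linop) : (forall f x, T f x = U f x) -> T = U.
Proof.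
case: T U => [T HT] [U HU] /= E.
have {E} E : T = U by apply/boolp.funext => f; apply/boolp.funext; apply: E.
by subst; congr Linop; apply: boolp.Prop_irrelevance.
Qed.

HB.instance Definition _ := boolp.gen_eqMixin linop.
HB.instance Definition _ := boolp.gen_choiceMixin linop.

Let linear0 : linear_op (fun f x => 0).
Proof. by move=> a f g; apply/boolp.funext => x; rewrite mulr0 addr0. Qed.

Let linearD (T U : linop) : linear_op (fun f x => T f x + U f x).
Proof.
by move=> a f g; apply/boolp.funext => x; rewrite !linopP mulrDr addrACA.
Qed.

Let linearN (T : linop) : linear_op (fun f x => - T f x).
Proof. by move=> a f g; apply/boolp.funext => x; rewrite !linopP opprD mulrN. Qed.

Let linearZ c (T : linop) : linear_op (fun f x => c * T f x).
Proof.
by move=> a f g; apply/boolp.funext => x; rewrite !linopP mulrDr mulrCA.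
Qed.

Let linear_comp (T U : linop) : linear_op (fun f => T (U f)).
Proof. by move=> a f g; rewrite !linopP. Qed.

Definition linop0 := Linop linear0.
Definition linopD T U := Linop (linearD T U).
Definition linopN T := Linop (linearN T).
Definition linopZ c T := Linop (linearZ c T).
Definition linop_comp T U := Linop (linear_comp T U).

Let linopDA : associative linopD.
Proof. by move=> *; apply: linop_eq => f x /=; rewrite addrA. Qed.
Let linopDC : commutative linopD.
Proof. by move=> *; apply: linop_eq => f x /=; rewrite addrC. Qed.
Let linop0D : left_id linop0 linopD.
Proof. by move=> *; apply: linop_eq => f x /=; rewrite add0r. Qed.
Let linopND : left_inverse linop0 linopN linopD.
Proof. by move=> *; apply: linop_eq => f x /=; rewrite addNr. Qed.

HB.instance Definition _ :=
  GRing.isZmodule.Build linop linopDA linopDC linop0D linopND.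

Let linopZA a b T : linopZ a (linopZ b T) = linopZ (a * b) T.
Proof. by apply: linop_eq => f x /=; rewrite mulrA. Qed.
Let linopZ1 : left_id 1 linopZ.
Proof. by move=> *; apply: linop_eq => f x /=; rewrite mul1r. Qed.
Let linopZDr : right_distributive linopZ +%R.
Proof. by move=> *; apply: linop_eq => f x /=; rewrite mulrDr. Qed.
Let linopZDl T : {morph linopZ^~ T : a b / a + b}.
Proof. by move=> *; apply: linop_eq => f x /=; rewrite mulrDl. Qed.

HB.instance Definition _ :=
  GRing.Zmodule_isLmodule.Build R linop linopZA linopZ1 linopZDr linopZDl.

Lemma linop_comp_alg : nu_alg_axioms linop_comp.
Proof.
split=> [T U V | a T U V | a T U V]; apply: linop_eq => // f x /=.
by rewrite (linopP V).
Qed.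

Lemma linop0E f x : (0 : linop) f x = 0. Proof. by []. Qed.

Lemma linopZE a (T : linop) f x : (a *: T) f x = a * T f x. Proof. by []. Qed.

Lemma linop_compE (T U : linop) f x : linop_comp T U f x = T (U f) x.
Proof. by []. Qed.

Lemma linear_guarded (b : pred X) (y : X -> X) :
  linear_op (fun f x => if b x then f (y x) else 0).
Proof. by move=> a f g; apply/boolp.funext => x; case: ifP; rewrite ?mulr0 ?addr0. Qed.

Definition guarded_op b y := Linop (linear_guarded b y).

Lemma sum_linopE (I : Type) (E : seq I) (F : I -> linop) f x :
  (\sum_(i <- E) F i) f x = \sum_(i <- E) F i f x.
Proof. by elim: E => [|i E IH]; rewrite ?big_nil // !big_cons -IH. Qed.

End LinearOperators.

Arguments guarded_op {R X} b y.

Section InfinitePathRepresentation.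
Variables (k : nat) (L : kgraph k) (R : comPzRingType).
Notation P := (kpath L).
Notation X := (ipath L).
Notation linop := (linop R X).

Definition rep_s l : linop := guarded_op (fun x => seg x (dg l) == l) (shift (dg l)).
Definition rep_ss l : linop := guarded_op (fun y => src l == irng y) (catp l).
Definition rep_p v : linop := guarded_op (fun x => irng x == v) id.

Lemma rep_sE l f x :
  rep_s l f x = if seg x (dg l) == l then f (shift (dg l) x) else 0.
Proof. by []. Qed.

Lemma rep_ssE l f y : rep_ss l f y = if src l == irng y then f (catp l y) else 0.
Proof. by []. Qed.

Lemma rep_pE v f x : rep_p v f x = if irng x == v then f x else 0.
Proof. by []. Qed.

Lemma rep_s_idp v : rep_s (idp v) = rep_p v.
Proof.
apply: linop_eq => f x; rewrite rep_sE rep_pE dg_idp seg0 shift0.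
case: (irng x =P v) => [->|ne]; first by rewrite eqxx.
by case: eqP => // /(congr1 (@rng _ L)); rewrite !rng_idp.
Qed.

Lemma rep_ss_idp v : rep_ss (idp v) = rep_p v.
Proof.
apply: linop_eq => f x; rewrite rep_pE rep_ssE src_idp eq_sym.
by case: eqP => // h; rewrite (catpE (l := idp v) (etrans (src_idp v) (esym h))) cat_idp.
Qed.

Notation "T \o U" := (linop_comp T U).

Lemma rep_s_comp l t : src l = rng t -> rep_s l \o rep_s t = rep_s (comp l t).
Proof.
move=> h; apply: linop_eq => f x; rewrite linop_compE !rep_sE dg_comp // seg_compE //.
by case: eqP => // _; rewrite shiftD.
Qed.

Lemma rep_ss_comp l t : src l = rng t -> rep_ss t \o rep_ss l = rep_ss (comp l t).
Proof.
move=> h; apply: linop_eq => f y; rewrite linop_compE !rep_ssE src_comp //.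
case: eqP => // h1; rewrite (catpE h1) irng_cat -h eqxx.
have h2 : src l = irng (cat h1) by rewrite irng_cat.
have h3 : src (comp l t) = irng y by rewrite src_comp.
by rewrite (catpE h2) (catpE h3) cat_cat.
Qed.

Lemma rep_ss_s l t : dg l = dg t ->
  rep_ss l \o rep_s t = if l == t then rep_p (src l) else 0.
Proof.
move=> hd; apply: linop_eq => f y; rewrite linop_compE rep_ssE.
case: eqP => h; last first.
  by case: eqP => // _; rewrite rep_pE; case: eqP => // E; case: h; rewrite E.
rewrite rep_sE (catpE h) -hd seg_cat.
by case: eqP => // _; rewrite rep_pE shift_cat h eqxx.
Qed.

Lemma rep_sum_s_ss v n e : enumerates v n e ->
  rep_p v = \sum_(l <- e) (rep_s l \o rep_ss l).
Proof.
move=> [ue he]; apply: linop_eq => f x; rewrite rep_pE sum_linopE.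
have -> : \sum_(l <- e) (rep_s l \o rep_ss l) f x =
          \sum_(l <- e) (if seg x n == l then f x else 0).
  rewrite big_seq [RHS]big_seq; apply: eq_bigr => l le.
  have [_ dl] := (he l).1 le.
  rewrite linop_compE rep_sE dl; case: eqP => // E; subst n.
  have h : src l = irng (shift (dg l) x) by rewrite irng_shift E.
  by rewrite rep_ssE h eqxx (catpE h) cat_shift.
rewrite sum_if_mem //; congr (if _ then _ else _).
apply/eqP/idP => [E|/he [<- _]]; last by rewrite rng_seg.
by apply/he; rewrite rng_seg dg_seg E.
Qed.

Lemma rep_KP_family : KP_family (@linop_comp R X) rep_p rep_s rep_ss.
Proof.
split.
- by move=> v; rewrite rep_s_idp rep_ss_idp.
- split=> [v | v w ne]; apply: linop_eq => f x; rewrite linop_compE !rep_pE.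
    by case: (irng x == v).
  by case: eqP => // ->; case: eqP.
- split; [exact: rep_s_comp | exact: rep_ss_comp | move=> l | move=> l];
    split; apply: linop_eq => f x; rewrite linop_compE.
  + rewrite rep_pE rep_sE; case: (seg x (dg l) =P l) => [E|]; last by case: ifP.
    by rewrite -E rng_seg eqxx.
  + by rewrite !rep_sE; case: eqP => // E; rewrite rep_pE irng_shift E eqxx.
  + by rewrite rep_pE rep_ssE eq_sym; case: (src l == irng x).
  + by rewrite !rep_ssE; case: eqP => // h; rewrite rep_pE (catpE h) irng_cat eqxx.
- exact: rep_ss_s.
- by move=> v n e _; apply: rep_sum_s_ss.
Qed.

End InfinitePathRepresentation.

Lemma scale_p_neq0 (k : nat) (L : kgraph k) (HL : row_finite_no_sources L)
  (R : comPzRingType) (A : lmodType R) (mul : A -> A -> A)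
  (p : kvert L -> A) (s ss : kpath L -> A) (HKP : is_KP_algebra mul p s ss)
  (r : R) v : r != 0 -> r *: p v != 0.
Proof.
move=> hr; case: HKP => _ _ /(_ _ _ _ _ _ (linop_comp_alg R (ipath L)) (rep_KP_family L R)).
case=> -[f [[f_lin _] fp _ _]] _; apply: contra_neq hr => rp0.
have f0 : f 0 = 0.
  have := f_lin 1 0 0; rewrite scaler0 addr0 scale1r => E.
  by apply: (@addrI _ (f 0)); rewrite addr0 -E.
have := congr1 (fun T : linop R (ipath L) => T (fun _ => 1) (ipath_at HL v)) (f_lin r (p v) 0).
rewrite addr0 rp0 f0 fp addr0 linop0E linopZE rep_pE irng_ipath_at eqxx mulr1.
by move->.
Qed.

Section KumjianPaskAlgebra.
Variables (k : nat) (L : kgraph k) (R : comPzRingType) (A : lmodType R)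
  (mul : A -> A -> A) (p : kvert L -> A) (s ss : kpath L -> A).
Hypothesis HKP : is_KP_algebra mul p s ss.
Notation P := (kpath L).
Local Notation "x ** y" := (mul x y) (at level 40, left associativity).

Let mul_alg : nu_alg_axioms mul. Proof. by case: HKP. Qed.
Let family : KP_family mul p s ss. Proof. by case: HKP. Qed.
Let mulA := nu_mulA mul_alg.

Lemma s_comp (l t : P) : src l = rng t -> s (comp l t) = s l ** s t.
Proof. by case: family => _ _ [h _ _ _] _ _ /h. Qed.

Lemma ss_comp (l t : P) : src l = rng t -> ss (comp l t) = ss t ** ss l.
Proof. by case: family => _ _ [_ h _ _] _ _ /h. Qed.

Lemma p_s (l : P) : p (rng l) ** s l = s l.
Proof. by case: family => _ _ [_ _ h _] _ _; case: (h l). Qed.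

Lemma p_ss (l : P) : p (src l) ** ss l = ss l.
Proof. by case: family => _ _ [_ _ _ h] _ _; case: (h l). Qed.

Lemma ss_p (l : P) : ss l ** p (rng l) = ss l.
Proof. by case: family => _ _ [_ _ _ h] _ _; case: (h l). Qed.

Lemma ss_s (l t : P) : dg l = dg t -> ss l ** s t = if l == t then p (src l) else 0.
Proof. by case: family => _ _ _ h _ /h. Qed.

Lemma ss_s_id (l : P) : ss l ** s l = p (src l).
Proof. by rewrite ss_s // eqxx. Qed.

Lemma p_idem v : p v ** p v = p v.
Proof. by case: family => _ [h _] _ _ _. Qed.

Lemma ss_s_comp (l g : P) : src l = rng g -> ss l ** s (comp l g) = s g.
Proof. by move=> h; rewrite s_comp // mulA ss_s_id h p_s. Qed.

Lemma ss_comp_s (l g : P) : src l = rng g -> ss (comp l g) ** s l = ss g.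
Proof. by move=> h; rewrite ss_comp // -mulA ss_s_id h ss_p. Qed.

Definition sproj (l : P) : A := s l ** ss l.

Lemma sproj_orth (l t : P) : dg l = dg t ->
  sproj l ** sproj t = if l == t then sproj l else 0.
Proof.
move=> hd; rewrite /sproj mulA -(mulA (s l)) ss_s //.
case: eqP => [<-|_]; first by rewrite -mulA p_ss.
by rewrite (nu_mul0r mul_alg) (nu_mul0l mul_alg).
Qed.

Lemma sproj_expand (l : P) n e : n != deg0 k -> enumerates (src l) n e ->
  sproj l = \sum_(t <- e) sproj (comp l t).
Proof.
move=> n_neq0 en; have [_ _ _ _ KP4] := family.
rewrite {1}/sproj -p_ss (KP4 _ _ _ n_neq0 en) (nu_mul_suml mul_alg).
rewrite (nu_mul_sumr mul_alg) !big_seq; apply: eq_bigr => t /(en.2 t) [ht _].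
by rewrite /sproj s_comp // ss_comp // !mulA.
Qed.

Lemma scale_sproj_comp_eq (mu nu g : P) (r : R) :
  src mu = src nu -> rng g = src mu -> in_D' mul s ss (r *: (s mu ** ss nu)) ->
  r *: sproj (comp mu g) = r *: sproj (comp nu g).
Proof.
move=> hsrc hg hD; have hnu : src nu = rng g by rewrite -hsrc.
set a := s mu ** ss nu; set Pm := sproj (comp mu g); set Pn := sproj (comp nu g).
set M := s (comp mu g) ** ss (comp nu g); set y := s (comp nu g) ** ss (comp mu g).
have aPn : a ** Pn = M by rewrite /a /Pn /sproj !mulA -(mulA (s mu)) ss_s_comp // -s_comp.
have Pma : Pm ** a = M.
  by rewrite /a /Pm /sproj !mulA -(mulA (s _)) ss_comp_s // -mulA -ss_comp.
have src_g : src (comp nu g) = src (comp mu g) by rewrite !src_comp.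
have My : M ** y = Pm by rewrite /M /y !mulA -(mulA (s _)) ss_s_id src_g -mulA p_ss.
have yM : y ** M = Pn by rewrite /M /y !mulA -(mulA (s _)) ss_s_id -src_g -mulA p_ss.
have ay : a ** y = Pm by rewrite /a /y !mulA -(mulA (s mu)) ss_s_comp // -s_comp.
have ya : y ** a = Pn.
  by rewrite /a /y !mulA -(mulA (s _)) ss_comp_s // -mulA -ss_comp.
have commPm : r *: a ** Pm = Pm ** (r *: a) := hD _ (inD_gen mul s ss (comp mu g)).
have commPn : r *: a ** Pn = Pn ** (r *: a) := hD _ (inD_gen mul s ss (comp nu g)).
have rPm : r *: Pm = r *: (Pn ** Pm).
  have rM : r *: M = Pn ** (r *: a) by rewrite -aPn -commPn (nu_mulZl mul_alg).
  rewrite -{1}My -(nu_mulZl mul_alg) rM -ay [in RHS]mulA.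
  by rewrite (nu_mulZr mul_alg) (nu_mulZl mul_alg).
have rPn : r *: Pn = r *: (Pn ** Pm).
  have rM : r *: M = (r *: a) ** Pm by rewrite -Pma commPm (nu_mulZr mul_alg).
  rewrite -{1}yM -(nu_mulZr mul_alg) rM -ya mulA.
  by rewrite (nu_mulZr mul_alg) (nu_mulZl mul_alg).
by rewrite rPm rPn.
Qed.

Section Cancellation.
Hypothesis HL : row_finite_no_sources L.
Variable r : R.
Hypothesis r_neq0 : r != 0.

(* Multiplying by sproj l picks out the summand of l, which is nonzero after scaling by r. *)
Lemma sproj_sum_subset (E1 E2 : seq P) N :
  uniq E1 -> uniq E2 -> {in E1, forall l, dg l = N} -> {in E2, forall l, dg l = N} ->
  r *: \sum_(l <- E1) sproj l = r *: \sum_(l <- E2) sproj l -> {subset E1 <= E2}.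
Proof.
move=> u1 u2 d1 d2 E l lE1; apply/negPn/negP => lE2.
have pick E' : uniq E' -> {in E', forall l, dg l = N} ->
    sproj l ** (r *: \sum_(t <- E') sproj t) = r *: (if l \in E' then sproj l else 0).
  move=> u' d'; rewrite (nu_mulZr mul_alg) (nu_mul_sumr mul_alg) -sum_if_mem //.
  by congr (_ *: _); rewrite !big_seq; apply: eq_bigr => t tE; rewrite sproj_orth // d1 ?d'.
have := pick _ u1 d1; rewrite E pick // lE1 (negbTE lE2) scaler0 => rl0.
have : ss l ** (r *: sproj l) ** s l = r *: p (src l).
  by rewrite (nu_mulZr mul_alg) (nu_mulZl mul_alg) /sproj mulA ss_s_id -mulA ss_s_id p_idem.
rewrite -rl0 (nu_mul0r mul_alg) (nu_mul0l mul_alg) => /esym/eqP.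
by rewrite (negbTE (scale_p_neq0 HL HKP _ r_neq0)).
Qed.

Lemma scale_sproj_inj (al be : P) : (0 < k)%N ->
  r *: sproj al = r *: sproj be -> sproj al = sproj be.
Proof.
move=> k_gt0 E.
(* The extra unit degree keeps both extension degrees nonzero, as (KP4) requires. *)
set one := diag_deg k 1.
have one_neq0 (m : degk k) : degadd m one != deg0 k.
  by apply/eqP => /ffunP /(_ (Ordinal k_gt0)); rewrite !ffunE addn1.
set N := degadd (dg al) (degadd (dg be) one).
have [[e1 en1] _] := HL (src al) (degadd (dg be) one).
have [[e2 en2] _] := HL (src be) (degadd (dg al) one).
have [u1 d1] := enumerates_map_comp en1; have [u2 d2] := enumerates_map_comp en2.
have {}d2 : {in map (comp be) e2, forall l, dg l = N}.
  move=> l /d2 ->; rewrite /N degaddA (degaddC (dg be)) -degaddA //.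
rewrite (sproj_expand (one_neq0 _) en1) (sproj_expand (one_neq0 _) en2) in E *.
rewrite -!(big_map (comp _) xpredT sproj) in E *.
apply: perm_big; apply: uniq_perm => // l; apply/idP/idP.
  exact: (sproj_sum_subset u1 u2 d1 d2 E).
exact: (sproj_sum_subset u2 u1 d2 d1 (esym E)).
Qed.

End Cancellation.
End KumjianPaskAlgebra.

Unset Implicit Arguments.
Theorem lemma4p9 (k : nat) (L : kgraph k) (HL : row_finite_no_sources L)
  (R : comPzRingType) (A : lmodType R) (mul : A -> A -> A)
  (p : kvert L -> A) (s ss : kpath L -> A)
  (HKP : is_KP_algebra mul p s ss)
  (mu nu : kpath L) (hsrc : src mu = src nu)
  (r : R) (hr : r != 0)
  (hD : in_D' mul s ss (r *: mul (s mu) (ss nu))) :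
  cycline_pair mul s ss mu nu.
Proof.
split=> // g hg.
have [k0 | k_gt0] := posnP k.
  by subst k; rewrite (kgraph0_idp mu) (kgraph0_idp nu) hsrc.
apply: (scale_sproj_inj HKP HL hr k_gt0).
exact: (scale_sproj_comp_eq HKP hsrc hg hD).
Qed.
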